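(* Let $\bar a>0$, $X=[0,\bar a]$, and let $f:\mathbb{R}_{\ge0}\to\mathbb{R}_{\ge0}$ satisfy: (i) $f$ is $L$-Lipschitz; (ii) the restriction of $f$ to $X$ is strictly concave; (iii) $f(x)=0$ for all $x\ge\bar a$. Let $0<\alpha\le\frac{1}{L+1}$ and $g(x)=\alpha f(x)+(1-\alpha)x$. Then $g$ restricted to $X$ satisfies: $g$ maps $X$ into $X$; $g$ is strictly concave and Lipschitz continuous on $X$; $g(x)\ge0$ for all $x\in X$; with $\bar x$ the maximizer of $g$ on $X$, the restriction of $g$ to $[\bar x,\bar a]$ is Lipschitz with some constant strictly less than $1$; and there is a positive $b\in X$ with $g(b)<b$. Moreover, for every $x_0>0$, the fixed-point iteration $x_{k+1}=g(x_k)$ converges to a fixed point of $f$.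
   Context: A function $f$ is $L$-Lipschitz if $|f(x)-f(y)|\le L|x-y|$ for all $x,y$; Lipschitz continuous if $L$-Lipschitz for some $L>0$. $f$ is strictly concave on an interval if $f((1-\lambda)x+\lambda y)>(1-\lambda)f(x)+\lambda f(y)$ for all $x\ne y$ in it and $0<\lambda<1$. *)

From Stdlib Require Import Reals.
Open Scope R_scope.

Definition lipschitz_on (D : R -> Prop) (K : R) (f : R -> R) : Prop :=
  forall x y, D x -> D y -> Rabs (f x - f y) <= K * Rabs (x - y).

Definition strictly_concave_on (D : R -> Prop) (f : R -> R) : Prop :=
  forall x y lam, D x -> D y -> x <> y -> 0 < lam < 1 ->
    f ((1 - lam) * x + lam * y) > (1 - lam) * f x + lam * f y.

Definition Icc (a b : R) : R -> Prop := fun x => a <= x <= b.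

Definition Rnonneg : R -> Prop := fun x => 0 <= x.

Definition relax (alpha : R) (f : R -> R) (x : R) : R :=
  alpha * f x + (1 - alpha) * x.

(* With [alpha * (L + 1) <= 1] the relaxed map [g = alpha f + (1 - alpha) id]
   is nondecreasing on [0, +oo), since the slope [1 - alpha] of the identity part
   dominates the slope [alpha L] of the Lipschitz part.  Hence the maximiser of the
   strictly concave [g] on [[0, abar]] is [abar] itself, so the contraction claim
   on [[xbar, abar]] is about a single point.  Monotonicity also makes every orbit
   monotone; it stays in [[0, max x0 abar]] because [g y = (1 - alpha) y] beyond
   [abar], so it converges, and the Lipschitz continuity of [g] makes the limit a
   fixed point of [g], i.e. of [f]. *)
From Stdlib Require Import Reals Lra.
Open Scope R_scope.

Lemma relax_strictly_concave (D : R -> Prop) (alpha : R) (f : R -> R) :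
  0 < alpha -> strictly_concave_on D f -> strictly_concave_on D (relax alpha f).
Proof.
  intros halpha hconc x y lam hx hy hxy hlam; unfold relax.
  pose proof (hconc x y lam hx hy hxy hlam) as hc.
  apply Rmult_lt_compat_l with (r := alpha) in hc; [nra | exact halpha].
Qed.

Lemma lipschitz_on_subset (D D' : R -> Prop) (K : R) (f : R -> R) :
  (forall x, D' x -> D x) -> lipschitz_on D K f -> lipschitz_on D' K f.
Proof. intros hsub hlip x y hx hy; exact (hlip x y (hsub x hx) (hsub y hy)). Qed.

Lemma relax_lipschitz (D : R -> Prop) (L alpha : R) (f : R -> R) :
  0 <= alpha <= 1 -> lipschitz_on D L f ->
  lipschitz_on D (alpha * L + (1 - alpha)) (relax alpha f).
Proof.
  intros halpha hlip x y hx hy; unfold relax.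
  replace (alpha * f x + (1 - alpha) * x - (alpha * f y + (1 - alpha) * y))
    with (alpha * (f x - f y) + (1 - alpha) * (x - y)) by ring.
  eapply Rle_trans; [apply Rabs_triang |].
  rewrite !Rabs_mult, (Rabs_pos_eq alpha), (Rabs_pos_eq (1 - alpha)) by lra.
  pose proof (hlip x y hx hy).
  apply Rmult_le_compat_l with (r := alpha) in H; lra.
Qed.

Lemma relax_nondecreasing (D : R -> Prop) (L alpha : R) (f : R -> R) (x y : R) :
  0 <= alpha -> alpha * (L + 1) <= 1 -> lipschitz_on D L f ->
  D x -> D y -> x <= y -> relax alpha f x <= relax alpha f y.
Proof.
  intros halpha hslope hlip hx hy hxy; unfold relax.
  assert (hf : f x - f y <= L * (y - x)).
  { rewrite <- (Rabs_pos_eq (y - x)), <- Rabs_minus_sym by lra.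
    eapply Rle_trans; [apply Rle_abs | exact (hlip x y hx hy)]. }
  apply Rmult_le_compat_l with (r := alpha) in hf; nra.
Qed.

Lemma relax_fixed_point (alpha : R) (f : R -> R) (p : R) :
  alpha <> 0 -> relax alpha f p = p -> f p = p.
Proof.
  unfold relax; intros halpha hp.
  assert (hdiff : alpha * (f p - p) = 0) by lra.
  destruct (Rmult_integral _ _ hdiff); [contradiction | lra].
Qed.

Lemma strictly_concave_nondecreasing_argmax (a b xbar : R) (g : R -> R) :
  strictly_concave_on (Icc a b) g ->
  (forall x y, Icc a b x -> Icc a b y -> x <= y -> g x <= g y) ->
  Icc a b xbar -> (forall x, Icc a b x -> g x <= g xbar) -> xbar = b.
Proof.
  intros hconc hmono [hxa hxb] hmax.
  destruct (Req_dec xbar b) as [-> | hne]; [reflexivity | exfalso].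
  set (m := (1 - 1 / 2) * xbar + 1 / 2 * b).
  assert (hmid : g m > (1 - 1 / 2) * g xbar + 1 / 2 * g b)
    by (apply hconc; unfold Icc; lra).
  assert (g m <= g b) by (apply hmono; unfold Icc, m; lra).
  assert (g b <= g xbar) by (apply hmax; unfold Icc; lra).
  lra.
Qed.

Lemma lipschitz_on_Icc_point (b c : R) (g : R -> R) : lipschitz_on (Icc b b) c g.
Proof.
  intros x y [hx1 hx2] [hy1 hy2].
  replace x with b by lra; replace y with b by lra.
  rewrite !Rminus_diag, Rabs_R0, Rmult_0_r; lra.
Qed.

Lemma Un_cv_lb (u : nat -> R) (m l : R) : (forall n, m <= u n) -> Un_cv u l -> m <= l.
Proof.
  intros hm hl; apply Rle_cv_lim with (fun _ => m) u; [exact hm | | exact hl].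
  intros eps heps; exists 0%nat; intros n _.
  unfold Rdist; rewrite Rminus_diag, Rabs_R0; exact heps.
Qed.

Lemma lipschitz_Un_cv (D : R -> Prop) (K : R) (g : R -> R) (u : nat -> R) (l : R) :
  0 <= K -> lipschitz_on D K g -> (forall n, D (u n)) -> D l ->
  Un_cv u l -> Un_cv (fun n => g (u n)) (g l).
Proof.
  intros hK hlip hu hl hcv eps heps.
  destruct (hcv (eps / (K + 1))) as [N HN]; [apply Rdiv_lt_0_compat; lra |].
  exists N; intros n hn; unfold Rdist in *.
  specialize (HN n hn).
  assert (hε : K * (eps / (K + 1)) < eps).
  { assert (eps / (K + 1) * (K + 1) = eps) by (field; lra).
    assert (0 < eps / (K + 1)) by (apply Rdiv_lt_0_compat; lra).
    nra. }
  eapply Rle_lt_trans; [exact (hlip _ _ (hu n) hl) |].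
  eapply Rle_lt_trans; [apply Rmult_le_compat_l; [exact hK | apply Rlt_le, HN] | exact hε].
Qed.

Section Orbits.

Variables (D : R -> Prop) (g : R -> R) (u : nat -> R).
Hypothesis orbit_in_D : forall n, D (u n).
Hypothesis orbit_step : forall n, u (S n) = g (u n).

Lemma nondecreasing_orbit_monotone :
  (forall y z, D y -> D z -> y <= z -> g y <= g z) -> Un_growing u \/ Un_decreasing u.
Proof.
  intros hmono.
  assert (hstep : forall m n, u m <= u n -> u (S m) <= u (S n))
    by (intros m n h; rewrite !orbit_step; apply hmono; auto).
  destruct (Rle_dec (u 0%nat) (u 1%nat)) as [hup | hdown]; [left | right];
    intro n; induction n as [| n IH]; try lra; apply hstep, IH.
Qed.

Lemma monotone_bounded_orbit_cv (m M : R) :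
  Un_growing u \/ Un_decreasing u -> (forall n, m <= u n <= M) -> exists l, Un_cv u l.
Proof.
  intros [hgrow | hdec] hbnd.
  - destruct (growing_cv u hgrow) as [l hl]; [| now exists l].
    exists M; intros y [n ->]; apply hbnd.
  - destruct (decreasing_cv u hdec) as [l hl]; [| now exists l].
    exists (- m); intros y [n ->]; unfold opp_seq; pose proof (hbnd n); lra.
Qed.

Lemma orbit_limit_fixed_point (K l : R) :
  0 <= K -> lipschitz_on D K g -> D l -> Un_cv u l -> g l = l.
Proof.
  intros hK hlip hl hcv.
  apply (UL_sequence (fun n => u (n + 1)%nat)); [| exact (CV_shift' u 1 l hcv)].
  intros eps heps.
  destruct (lipschitz_Un_cv D K g u l hK hlip orbit_in_D hl hcv eps heps) as [N HN].
  exists N; intros n hn; rewrite Nat.add_1_r, orbit_step; exact (HN n hn).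
Qed.

End Orbits.

Section Relaxation.

Variables (abar L alpha : R) (f : R -> R).
Hypothesis hL : 0 < L.
Hypothesis hfnn : forall x, 0 <= x -> 0 <= f x.
Hypothesis hlip : lipschitz_on Rnonneg L f.
Hypothesis hzero : forall x, abar <= x -> f x = 0.
Hypothesis halpha : 0 < alpha.
Hypothesis hslope : alpha * (L + 1) <= 1.

Lemma alpha_lt_1 : alpha < 1.
Proof. nra. Qed.

Lemma relax_nonneg (x : R) : 0 <= x -> 0 <= relax alpha f x.
Proof.
  intros hx; unfold relax; pose proof (hfnn x hx); pose proof alpha_lt_1; nra.
Qed.

Lemma relax_beyond (x : R) : abar <= x -> relax alpha f x = (1 - alpha) * x.
Proof. intros hx; unfold relax; rewrite hzero by exact hx; ring. Qed.

Lemma relax_le_Rmax (x : R) : 0 <= x -> relax alpha f x <= Rmax x abar.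
Proof.
  intros hx; pose proof alpha_lt_1.
  destruct (Rle_dec x abar) as [hxa | hxa].
  - apply Rle_trans with (relax alpha f abar).
    + apply (relax_nondecreasing Rnonneg L); unfold Rnonneg; auto; lra.
    + rewrite relax_beyond by lra; pose proof (Rmax_r x abar); nra.
  - rewrite relax_beyond by lra; pose proof (Rmax_l x abar); nra.
Qed.

Lemma relax_maps_Icc (x : R) : Icc 0 abar x -> Icc 0 abar (relax alpha f x).
Proof.
  intros [hx0 hxa]; split; [exact (relax_nonneg x hx0) |].
  pose proof (relax_le_Rmax x hx0); rewrite Rmax_right in * by exact hxa; lra.
Qed.

Lemma relax_orbit_cv_fixed_point (x : nat -> R) :
  0 <= x 0%nat -> (forall k, x (S k) = relax alpha f (x k)) ->
  exists p, 0 <= p /\ f p = p /\ Un_cv x p.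
Proof.
  intros hx0 hstep.
  assert (hnn : forall k, Rnonneg (x k)).
  { intro k; induction k as [| k IH]; [exact hx0 |].
    rewrite hstep; exact (relax_nonneg _ IH). }
  assert (hbnd : forall k, 0 <= x k <= Rmax (x 0%nat) abar).
  { intro k; split; [exact (hnn k) |]; induction k as [| k IH]; [apply Rmax_l |].
    rewrite hstep; eapply Rle_trans; [exact (relax_le_Rmax _ (hnn k)) |].
    apply Rmax_lub; [exact IH | apply Rmax_r]. }
  assert (hmono : forall y z, Rnonneg y -> Rnonneg z -> y <= z ->
                    relax alpha f y <= relax alpha f z)
    by (intros; apply (relax_nondecreasing Rnonneg L); auto; lra).
  destruct (monotone_bounded_orbit_cv x _ _
              (nondecreasing_orbit_monotone Rnonneg _ x hnn hstep hmono) hbnd)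
    as [p hp].
  assert (hp0 : 0 <= p) by (apply (Un_cv_lb x 0 p); [apply hnn | exact hp]).
  pose proof alpha_lt_1.
  exists p; repeat split; [exact hp0 | | exact hp].
  apply (relax_fixed_point alpha); [lra |].
  apply (orbit_limit_fixed_point Rnonneg _ x hnn hstep (alpha * L + (1 - alpha)));
    [nra | apply relax_lipschitz; [lra | exact hlip] | exact hp0 | exact hp].
Qed.

End Relaxation.

Theorem mainTheorem9 (abar L alpha : R) (f : R -> R)
  (habar : 0 < abar)
  (hL : 0 < L)
  (hfnn : forall x, 0 <= x -> 0 <= f x)
  (hlip : lipschitz_on Rnonneg L f)
  (hconc : strictly_concave_on (Icc 0 abar) f)
  (hzero : forall x, abar <= x -> f x = 0)
  (halpha : 0 < alpha <= 1 / (L + 1)) :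
  let g := relax alpha f in
  (forall x, Icc 0 abar x -> Icc 0 abar (g x)) /\
  strictly_concave_on (Icc 0 abar) g /\
  (exists K, 0 < K /\ lipschitz_on (Icc 0 abar) K g) /\
  (forall x, Icc 0 abar x -> 0 <= g x) /\
  (exists xbar, Icc 0 abar xbar /\ forall x, Icc 0 abar x -> g x <= g xbar) /\
  (forall xbar, Icc 0 abar xbar -> (forall x, Icc 0 abar x -> g x <= g xbar) ->
     exists c, 0 < c < 1 /\ lipschitz_on (Icc xbar abar) c g) /\
  (exists b, 0 < b <= abar /\ g b < b) /\
  (forall (x0 : R) (x : nat -> R), 0 < x0 -> x 0%nat = x0 ->
     (forall k, x (S k) = g (x k)) ->
     exists p, 0 <= p /\ f p = p /\ Un_cv x p).
Proof.
  intro g.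
  destruct halpha as [halpha0 halpha1].
  assert (hslope : alpha * (L + 1) <= 1).
  { replace 1 with (1 / (L + 1) * (L + 1)) at 2 by (field; lra).
    apply Rmult_le_compat_r; lra. }
  assert (halpha_lt_1 := alpha_lt_1 L alpha hL halpha0 hslope).
  assert (hlipX : lipschitz_on (Icc 0 abar) L f)
    by (apply (lipschitz_on_subset Rnonneg); [intros x [hx0 _]; exact hx0 | exact hlip]).
  assert (hmono : forall x y, Icc 0 abar x -> Icc 0 abar y -> x <= y -> g x <= g y)
    by (intros; apply (relax_nondecreasing (Icc 0 abar) L); auto; lra).
  assert (hmax : forall x, Icc 0 abar x -> g x <= g abar)
    by (intros x [hx0 hxa]; apply hmono; unfold Icc; lra).
  assert (hmapsX := relax_maps_Icc abar L alpha f hL hfnn hlip hzero halpha0 hslope).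
  assert (hconcg := relax_strictly_concave _ _ _ halpha0 hconc).
  split; [exact hmapsX |].
  split; [exact hconcg |].
  split.
  { exists (alpha * L + (1 - alpha)); split; [nra |].
    apply relax_lipschitz; [lra | exact hlipX]. }
  split; [intros x hx; exact (proj1 (hmapsX x hx)) |].
  split; [exists abar; split; [unfold Icc; lra | exact hmax] |].
  split.
  { intros xbar hxbar hxbar_max.
    rewrite (strictly_concave_nondecreasing_argmax 0 abar xbar g) by assumption.
    exists (1 / 2); split; [lra | apply lipschitz_on_Icc_point]. }
  split.
  { exists abar; split; [lra |].
    unfold g; rewrite (relax_beyond abar) by (auto; lra); nra. }
  intros x0 x hx0 hx00 hstep.
  apply (relax_orbit_cv_fixed_point abar L alpha); auto; lra.
Qed.
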